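(* Consider the following kinetic transport model. Let $\{Z_k\}_{k\ge1}$ be a Markov chain on the two states $\{\mathrm{F},\mathrm{A}\}$ with transition matrix $$\begin{pmatrix}1-a & a\\ b & 1-b\end{pmatrix}$$ (rows and columns indexed by $\mathrm F,\mathrm A$), $a,b\in[0,1]$, $a+b=1$, and with initial distribution equal to the stationary distribution $(\frac{b}{a+b},\frac{a}{a+b})$. Let $K_n=\sum_{k=1}^n \mathbf 1_{\{Z_k=\mathrm F\}}$. Independently of $\{Z_k\}$, let $(X_k,Y_k)_{k\ge1}$ be i.i.d. with $$P((X_k,Y_k)=(j,0))=\alpha,\qquad P((X_k,Y_k)=(0,j))=\beta\qquad (j=\pm1),$$ $\alpha,\beta\ge0$, $\alpha+\beta=1/2$. Let $S(n)=(S_X(n),S_Y(n))=\sum_{k=1}^{K_n}(X_k+1,Y_k)$. Then for $n\ge1$ and $0\le x\le n$, $$\operatorname{Var}(S_Y(n)\mid S_X(n)=n+x)=\operatorname{Var}(S_Y(n)\mid S_X(n)=n-x).$$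
   Context: Conditional variances are considered for conditioning events of positive probability. *)

From mathcomp Require Import all_boot all_order all_algebra.
Set Implicit Arguments. Unset Strict Implicit. Unset Printing Implicit Defensive.
Import Order.TTheory GRing.Theory Num.Theory.
Local Open Scope ring_scope.

Section Model.
Variable R : realFieldType.
Variables (a b alpha beta : R).

(* States of the chain: true = F, false = A. *)
Definition trans (s t : bool) : R :=
  match s, t with
  | true, true => 1 - a
  | true, false => a
  | false, true => b
  | false, false => 1 - b
  end.

Definition init_dist (s : bool) : R := if s then b / (a + b) else a / (a + b).

Fixpoint mc_tail (s : bool) (l : seq bool) : R :=
  match l with
  | [::] => 1
  | t :: l' => trans s t * mc_tail t l'
  end.

Definition mc_prob (l : seq bool) : R :=
  match l with
  | [::] => 1
  | s :: l' => init_dist s * mc_tail s l'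
  end.

Definition stepX (i : 'I_4) : int :=
  match val i with 0%N => 1 | 1%N => -1 | _ => 0 end.
Definition stepY (i : 'I_4) : int :=
  match val i with 2%N => 1 | 3%N => -1 | _ => 0 end.
Definition step_prob (i : 'I_4) : R := if (val i < 2)%N then alpha else beta.

Variable n : nat.

(* Outcomes: (Z_1..Z_n) and ((X_k,Y_k))_{k=1..n}, indices shifted by one. *)
Definition Omega := ({ffun 'I_n -> bool} * {ffun 'I_n -> 'I_4})%type.

Definition weight (w : Omega) : R :=
  mc_prob [seq w.1 i | i <- enum 'I_n] * \prod_(i < n) step_prob (w.2 i).

Definition Kn (w : Omega) : nat := (\sum_(i < n) (w.1 i : nat))%N.

Definition SX (w : Omega) : int :=
  \sum_(i < n | (i < Kn w)%N) (stepX (w.2 i) + 1).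
Definition SY (w : Omega) : int :=
  \sum_(i < n | (i < Kn w)%N) stepY (w.2 i).

Definition Prob (A : pred Omega) : R := \sum_(w | A w) weight w.

Definition cond_exp (f : Omega -> R) (A : pred Omega) : R :=
  (\sum_(w | A w) weight w * f w) / Prob A.

Definition cond_var (f : Omega -> R) (A : pred Omega) : R :=
  cond_exp (fun w => (f w - cond_exp f A) ^+ 2) A.

End Model.

(* With a + b = 1 both rows of the transition matrix equal (b, a), so the Z_k
   are i.i.d. with P(Z_k = F) = b.  Let M_n(s, g) = E[1{S_X(n) = s} g(S_Y(n))].
   Conditioning on Z_1 gives, for s = n + 1 + j,
     M_{n+1}(n+1+j, g) = (a + b alpha) M_n(n+j+1, g) + b alpha M_n(n+j-1, g)
                        + b beta (M_n(n+j, g(1 + .)) + M_n(n+j, g(-1 + .))),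
   which is invariant under j -> -j once M_n(n+j, .) is rescaled by
   (a + b alpha)^j and M_n(n-j, .) by (b alpha)^j.  Induction on n gives
   (a + b alpha)^x M_n(n+x, .) = (b alpha)^x M_n(n-x, .), so the conditional
   laws of S_Y(n) given S_X(n) = n + x and S_X(n) = n - x coincide. *)
From mathcomp Require Import all_boot all_order all_algebra.
From mathcomp Require Import ring lra zify.
Set Implicit Arguments. Unset Strict Implicit. Unset Printing Implicit Defensive.
Import Order.TTheory GRing.Theory Num.Theory.
Local Open Scope ring_scope.

Section FfunCons.
Variables (T : finType) (n : nat).

Definition ffun_cons (t : T) (f : {ffun 'I_n -> T}) : {ffun 'I_n.+1 -> T} :=
  [ffun i => if unlift ord0 i is Some j then f j else t].
Definition ffun_rcons (f : {ffun 'I_n -> T}) (t : T) : {ffun 'I_n.+1 -> T} :=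
  [ffun i => if unlift ord_max i is Some j then f j else t].

Lemma ffun_cons0 t f : ffun_cons t f ord0 = t.
Proof. by rewrite ffunE unlift_none. Qed.

Lemma ffun_consS t f i : ffun_cons t f (lift ord0 i) = f i.
Proof. by rewrite ffunE liftK. Qed.

Lemma ffun_rcons_max f t : ffun_rcons f t ord_max = t.
Proof. by rewrite ffunE unlift_none. Qed.

Lemma ffun_rcons_widen f t i : ffun_rcons f t (widen_ord (leqnSn n) i) = f i.
Proof.
have -> : widen_ord (leqnSn n) i = lift ord_max i by apply/val_inj; exact: (esym (lift_max i)).
by rewrite ffunE liftK.
Qed.

Lemma big_ffun_cons (V : nmodType) (F : {ffun 'I_n.+1 -> T} -> V) :
  \sum_f F f = \sum_t \sum_f F (ffun_cons t f).
Proof.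
rewrite pair_big (reindex (fun p => ffun_cons p.1 p.2)) //=.
exists (fun f => (f ord0, [ffun j => f (lift ord0 j)])) => [[t f] _ | f _] /=.
  by rewrite ffun_cons0; congr pair; apply/ffunP => j; rewrite ffunE ffun_consS.
by apply/ffunP => i; rewrite ffunE; case: unliftP => [j ->|->]; rewrite ?ffunE.
Qed.

Lemma big_ffun_rcons (V : nmodType) (F : {ffun 'I_n.+1 -> T} -> V) :
  \sum_f F f = \sum_f \sum_t F (ffun_rcons f t).
Proof.
rewrite pair_big (reindex (fun p => ffun_rcons p.1 p.2)) //=.
exists (fun f => ([ffun j => f (lift ord_max j)], f ord_max)) => [[f t] _ | f _] /=.
  by rewrite ffun_rcons_max; congr pair; apply/ffunP => j; rewrite !ffunE liftK.
by apply/ffunP => i; rewrite ffunE; case: unliftP => [j ->|->]; rewrite ?ffunE.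
Qed.

Lemma prod_ffun_cons (S : pzSemiRingType) (h : T -> S) t f :
  \prod_(i < n.+1) h (ffun_cons t f i) = h t * \prod_(i < n) h (f i).
Proof.
by rewrite big_ord_recl ffun_cons0; congr (_ * _); apply: eq_bigr => i _; rewrite ffun_consS.
Qed.

Lemma prod_ffun_rcons (S : pzSemiRingType) (h : T -> S) f t :
  \prod_(i < n.+1) h (ffun_rcons f t i) = \prod_(i < n) h (f i) * h t.
Proof.
rewrite big_ord_recr ffun_rcons_max; congr (_ * _).
by apply: eq_bigr => i _; rewrite ffun_rcons_widen.
Qed.

Lemma big_prefix_cons (V : nmodType) (h : T -> V) k t f :
  \sum_(i < n.+1 | (i < k.+1)%N) h (ffun_cons t f i)
  = h t + \sum_(i < n | (i < k)%N) h (f i).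
Proof.
rewrite big_mkcond big_ord_recl /= ffun_cons0 [in RHS]big_mkcond.
by congr (_ + _); apply: eq_bigr => i _; rewrite ffun_consS.
Qed.

Lemma big_prefix_rcons (V : nmodType) (h : T -> V) k f t : (k <= n)%N ->
  \sum_(i < n.+1 | (i < k)%N) h (ffun_rcons f t i)
  = \sum_(i < n | (i < k)%N) h (f i).
Proof.
move=> le_kn; rewrite big_mkcond big_ord_recr /= ltnNge le_kn addr0.
by rewrite [in RHS]big_mkcond; apply: eq_bigr => i _; rewrite ffun_rcons_widen.
Qed.

End FfunCons.

Lemma big_Omega (V : nmodType) n (F : Omega n -> V) :
  \sum_w F w = \sum_w1 \sum_w2 F (w1, w2).
Proof. by rewrite pair_big; apply: eq_bigr => -[]. Qed.

Lemma Kn_cons n z (w1 : {ffun 'I_n -> bool}) W W' :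
  Kn ((ffun_cons z w1, W) : Omega n.+1) = (z + Kn ((w1, W') : Omega n))%N.
Proof.
rewrite /Kn big_ord_recl /= ffun_cons0.
by congr addn; apply: eq_bigr => i _; rewrite ffun_consS.
Qed.

Lemma Kn_le n (w : Omega n) : (Kn w <= n)%N.
Proof.
rewrite /Kn -[X in (_ <= X)%N]card_ord -sum1_card.
by apply: leq_sum => i _; case: (w.1 i).
Qed.

Lemma SX_cons_F n w1 t w2 :
  SX ((ffun_cons true w1, ffun_cons t w2) : Omega n.+1)
  = stepX t + 1 + SX ((w1, w2) : Omega n).
Proof. by rewrite /SX (Kn_cons _ _ _ w2) add1n (big_prefix_cons (fun u => stepX u + 1)). Qed.

Lemma SY_cons_F n w1 t w2 :
  SY ((ffun_cons true w1, ffun_cons t w2) : Omega n.+1)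
  = stepY t + SY ((w1, w2) : Omega n).
Proof. by rewrite /SY (Kn_cons _ _ _ w2) add1n (big_prefix_cons stepY). Qed.

(* When Z_1 = A the walk uses at most n of the n + 1 steps, so the unused step
   is split off at the end rather than at the front. *)
Lemma SX_cons_A n w1 t w2 :
  SX ((ffun_cons false w1, ffun_rcons w2 t) : Omega n.+1)
  = SX ((w1, w2) : Omega n).
Proof. by rewrite /SX (Kn_cons _ _ _ w2) (big_prefix_rcons (fun u => stepX u + 1)) // Kn_le. Qed.

Lemma SY_cons_A n w1 t w2 :
  SY ((ffun_cons false w1, ffun_rcons w2 t) : Omega n.+1)
  = SY ((w1, w2) : Omega n).
Proof. by rewrite /SY (Kn_cons _ _ _ w2) (big_prefix_rcons stepY) // Kn_le. Qed.

Section Model.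
Variables (R : realFieldType) (a b alpha beta : R).
Hypotheses (hab : a + b = 1) (halphabeta : alpha + beta = 1 / 2).

Local Notation weight := (weight a b alpha beta).
Local Notation step_prob := (step_prob alpha beta).

Definition state_prob (z : bool) : R := if z then b else a.

Lemma mc_tail_iid s l : mc_tail a b s l = \prod_(t <- l) state_prob t.
Proof.
elim: l s => [|t l IH] s /=; first by rewrite big_nil.
rewrite big_cons IH; congr (_ * _).
by case: s; case: t => //=; apply/eqP; rewrite subr_eq ?hab // addrC hab.
Qed.

Lemma mc_prob_iid l : mc_prob a b l = \prod_(t <- l) state_prob t.
Proof.
case: l => [|s l] /=; first by rewrite big_nil.
by rewrite big_cons mc_tail_iid /init_dist hab !divr1; case: s.
Qed.

Lemma weightE n (w : Omega n) :
  weight w = \prod_(i < n) state_prob (w.1 i) * \prod_(i < n) step_prob (w.2 i).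
Proof. by rewrite /weight mc_prob_iid big_map big_enum. Qed.

Lemma weight_cons_F n w1 t w2 :
  weight ((ffun_cons true w1, ffun_cons t w2) : Omega n.+1)
  = b * step_prob t * weight ((w1, w2) : Omega n).
Proof. by rewrite !weightE /= !prod_ffun_cons /state_prob; ring. Qed.

Lemma weight_cons_A n w1 t w2 :
  weight ((ffun_cons false w1, ffun_rcons w2 t) : Omega n.+1)
  = a * step_prob t * weight ((w1, w2) : Omega n).
Proof. by rewrite !weightE /= prod_ffun_cons prod_ffun_rcons /state_prob; ring. Qed.

Lemma sum_step_prob : \sum_t step_prob t = 1.
Proof. by rewrite !big_ord_recl big_ord0 /step_prob /=; move: halphabeta; lra. Qed.

Definition moment n (s : int) (g : int -> R) : R :=
  \sum_(w : Omega n) weight w * ((SX w == s)%:R * g (SY w)).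

Lemma eq_moment n s s' g g' : s = s' -> g =1 g' -> moment n s g = moment n s' g'.
Proof. by move=> -> eq_g; apply: eq_bigr => w _; rewrite eq_g. Qed.

Lemma moment0 s g : s != 0 -> moment 0 s g = 0.
Proof.
move=> s_neq0; apply: big1 => w _.
by rewrite /SX big_ord0 eq_sym (negbTE s_neq0) mul0r mulr0.
Qed.

Lemma momentS n s g :
  moment n.+1 s g = a * moment n s g
    + b * \sum_t step_prob t * moment n (s - (stepX t + 1)) (fun y => g (stepY t + y)).
Proof.
rewrite /moment big_Omega big_ffun_cons big_bool /= addrC; congr (_ + _).
  rewrite [in RHS]big_Omega mulr_sumr; apply: eq_bigr => w1 _.
  rewrite big_ffun_rcons mulr_sumr; apply: eq_bigr => w2 _.
  under eq_bigr do rewrite weight_cons_A SX_cons_A SY_cons_A.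
  by rewrite -[RHS]mulr1 -sum_step_prob mulr_sumr; apply: eq_bigr => t _; ring.
under eq_bigr do rewrite big_ffun_cons.
rewrite exchange_big mulr_sumr; apply: eq_bigr => t _.
rewrite [in RHS]big_Omega !mulr_sumr; apply: eq_bigr => w1 _.
rewrite !mulr_sumr; apply: eq_bigr => w2 _.
rewrite weight_cons_F SX_cons_F SY_cons_F.
have -> : (stepX t + 1 + SX ((w1, w2) : Omega n) == s)
          = (SX ((w1, w2) : Omega n) == s - (stepX t + 1)).
  by apply/eqP/eqP; lia.
by ring.
Qed.

Lemma momentS_shift n (j : int) g :
  moment n.+1 (n.+1%:Z + j) g =
    (a + b * alpha) * moment n (n%:Z + (j + 1)) g
    + b * alpha * moment n (n%:Z + (j - 1)) g
    + b * beta * (moment n (n%:Z + j) (fun y => g (1 + y))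
                  + moment n (n%:Z + j) (fun y => g (-1 + y))).
Proof.
rewrite momentS !big_ord_recl big_ord0 /step_prob /stepX /stepY /=.
rewrite (@eq_moment _ (n.+1%:Z + j) (n%:Z + (j + 1)) g g) //; last by lia.
rewrite (@eq_moment _ (_ - (1 + 1)) (n%:Z + (j - 1)) _ g); last 2 first.
- by lia.
- by move=> y; rewrite add0r.
rewrite (@eq_moment _ (_ - (-1 + 1)) (n%:Z + (j + 1)) _ g); last 2 first.
- by lia.
- by move=> y; rewrite add0r.
rewrite !(@eq_moment _ (_ - (0 + 1)) (n%:Z + j) _ _ _ (frefl _)); last 2 first.
- by lia.
- by lia.
by ring.
Qed.

Lemma moment_reflect n (j : nat) g :
  (a + b * alpha) ^+ j * moment n (n%:Z + j%:Z) g
  = (b * alpha) ^+ j * moment n (n%:Z - j%:Z) g.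
Proof.
elim: n j g => [|n IH] [|k] g;
  try by rewrite !expr0 !mul1r; apply: eq_moment => //; lia.
  by rewrite !moment0 ?mulr0 //; apply/eqP; lia.
rewrite !momentS_shift.
rewrite (@eq_moment _ (_ + (k.+1%:Z + 1)) (n%:Z + k.+2%:Z) g g) //; last by lia.
rewrite (@eq_moment _ (_ + (k.+1%:Z - 1)) (n%:Z + k%:Z) g g) //; last by lia.
rewrite (@eq_moment _ (_ + (- k.+1%:Z + 1)) (n%:Z - k%:Z) g g) //; last by lia.
rewrite (@eq_moment _ (_ + (- k.+1%:Z - 1)) (n%:Z - k.+2%:Z) g g) //; last by lia.
have IH2 := IH k.+2 g; have IH0 := IH k g.
have IHp := IH k.+1 (fun y => g (1 + y)); have IHm := IH k.+1 (fun y => g (-1 + y)).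
set c0 := a + b * alpha in IH2 IH0 IHp IHm *; set c2 := b * alpha in IH2 IH0 IHp IHm *.
transitivity (c0 ^+ k.+2 * moment n (n%:Z + k.+2%:Z) g
   + c2 * c0 * (c0 ^+ k * moment n (n%:Z + k%:Z) g)
   + b * beta * (c0 ^+ k.+1 * moment n (n%:Z + k.+1%:Z) (fun y => g (1 + y))
                 + c0 ^+ k.+1 * moment n (n%:Z + k.+1%:Z) (fun y => g (-1 + y)))).
  by rewrite !exprS; ring.
by rewrite IH2 IH0 IHp IHm !exprS; ring.
Qed.

Lemma moment_degenerate : a + b * alpha = 0 -> b * alpha = 0 ->
  forall n (j : int) g, j != 0 -> moment n (n%:Z + j) g = 0.
Proof.
move=> c0_eq0 c2_eq0; elim=> [|n IH] j g j_neq0.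
  by rewrite moment0 // add0r.
by rewrite momentS_shift c0_eq0 c2_eq0 !mul0r !add0r !IH ?addr0 ?mulr0.
Qed.

Lemma sum_cond_moment n s (f : int -> R) :
  \sum_(w : Omega n | SX w == s) weight w * f (SY w) = moment n s f.
Proof.
rewrite big_mkcond; apply: eq_bigr => w _.
by case: (SX w == s); rewrite ?mul1r ?mul0r ?mulr0.
Qed.

Definition var_of_moments (M : (int -> R) -> R) : R :=
  M (fun y => (y%:~R - M (fun y => y%:~R) / M (fun _ => 1)) ^+ 2) / M (fun _ => 1).

Lemma var_of_momentsZ (M M' : (int -> R) -> R) r : r != 0 ->
  (forall g, M g = r * M' g) -> var_of_moments M = var_of_moments M'.
Proof.
move=> r_neq0 MM'; rewrite /var_of_moments !MM'.
by rewrite -!mulf_div !divff // !mul1r.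
Qed.

Lemma Prob_SXE n s : Prob a b alpha beta (fun w : Omega n => SX w == s) = moment n s (fun _ => 1).
Proof. by rewrite -sum_cond_moment; apply: eq_bigr => w _; rewrite mulr1. Qed.

Lemma cond_var_SYE n s :
  cond_var a b alpha beta (fun w : Omega n => (SY w)%:~R) (fun w => SX w == s)
  = var_of_moments (moment n s).
Proof.
rewrite /cond_var /cond_exp Prob_SXE (sum_cond_moment n s (fun y => y%:~R)).
by rewrite (sum_cond_moment n s (fun y => (y%:~R - _) ^+ 2)).
Qed.

End Model.

Theorem proposition3 (R : realFieldType) (a b alpha beta : R) (n x : nat) :
  0 <= a <= 1 -> 0 <= b <= 1 -> a + b = 1 ->
  0 <= alpha -> 0 <= beta -> alpha + beta = 1 / 2 ->
  (1 <= n)%N -> (x <= n)%N ->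
  0 < Prob a b alpha beta (fun w => SX (n:=n) w == (n + x)%N%:Z) ->
  0 < Prob a b alpha beta (fun w => SX (n:=n) w == (n - x)%N%:Z) ->
  cond_var a b alpha beta (fun w => (SY (n:=n) w)%:~R) (fun w => SX (n:=n) w == (n + x)%N%:Z)
  = cond_var a b alpha beta (fun w => (SY (n:=n) w)%:~R) (fun w => SX (n:=n) w == (n - x)%N%:Z).
Proof.
move=> /andP[a_ge0 _] /andP[b_ge0 _] hab alpha_ge0 _ halphabeta _ le_xn.
rewrite !Prob_SXE !cond_var_SYE => Pplus _.
set c0 := a + b * alpha; set c2 := b * alpha.
have reflect_x g : c0 ^+ x * moment a b alpha beta n (n + x)%N%:Z g
                   = c2 ^+ x * moment a b alpha beta n (n - x)%N%:Z g.
  by rewrite PoszD -(subzn le_xn) moment_reflect.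
have c0x_neq0 : c0 ^+ x != 0.
  rewrite expf_eq0; apply/andP => -[x_gt0 /eqP c0_eq0].
  have c2_eq0 : c2 = 0 by rewrite /c2 /c0 in c0_eq0 *; nra.
  by move: Pplus; rewrite PoszD moment_degenerate ?ltxx //; lia.
have c2x_neq0 : c2 ^+ x != 0.
  apply: contraTneq Pplus => c2x_eq0.
  move/eqP: (reflect_x (fun _ => 1)); rewrite c2x_eq0 mul0r mulf_eq0 (negbTE c0x_neq0).
  by move=> /eqP ->; rewrite ltxx.
apply: (@var_of_momentsZ _ _ _ (c2 ^+ x / c0 ^+ x)) => [|g].
  by rewrite mulf_neq0 ?invr_eq0.
by rewrite mulrAC -reflect_x mulrAC divff // mul1r.
Qed.
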